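(* Let $G$ be a simple dimension group with exactly $n>1$ pure (extremal) normalized traces. If either $\operatorname{rank}(G/\mathrm{Inf}(G))=n$, or $\operatorname{rank}(G/\mathrm{Inf}(G))=n+1$ and $G/\mathrm{Inf}(G)$ is finitely generated, then $G$ is globally irrationally miscible.
   Context: A dimension group is an unperforated partially ordered abelian group with the Riesz interpolation property; simple means no nontrivial order ideals. For an order unit $u$, $S(G,u)$ is the compact convex set of states (homomorphisms $\sigma:G\to\mathbb R$, $\sigma(G^+)\ge0$, $\sigma(u)=1$), and pure traces are its extreme points. $\mathrm{Inf}(G)=\{g:-\epsilon u\le g\le\epsilon u\ \forall\epsilon\in\mathbb Q_{>0}\}$. $\operatorname{rank}H=\dim_{\mathbb Q}(H\otimes\mathbb Q)$. $J(G,u)=\{g:\sigma\mapsto\sigma(g)\text{ constant on }S(G,u)\}$ with $\Phi(g)$ the constant; $(G,u)$ is irrationally miscible if $\Phi(J(G,u))\subseteq\mathbb Q$, and $G$ is globally irrationally miscible if this holds for all order units $u$. *)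

From HB Require Import structures.
From mathcomp Require Import all_boot all_order all_algebra.
From mathcomp Require Import reals.
Set Implicit Arguments. Unset Strict Implicit. Unset Printing Implicit Defensive.
Import Order.TTheory GRing.Theory Num.Theory.
Local Open Scope ring_scope.

Section PoGroups.
Variable G : zmodType.
(* P is the positive cone G^+ ; x <= y  iff  y - x \in G^+ *)
Variable P : G -> Prop.

Definition leG (x y : G) : Prop := P (y - x).

Definition is_pogroup : Prop :=
  [/\ P 0, (forall x y, P x -> P y -> P (x + y)) & (forall x, P x -> P (- x) -> x = 0)].

Definition directed : Prop := forall g, exists a b, [/\ P a, P b & g = a - b].

Definition unperforated : Prop := forall (n : nat) (g : G), (0 < n)%N -> P (g *+ n) -> P g.

Definition riesz_interpolation : Prop :=
  forall a1 a2 b1 b2, leG a1 b1 -> leG a1 b2 -> leG a2 b1 -> leG a2 b2 ->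
    exists c, [/\ leG a1 c, leG a2 c, leG c b1 & leG c b2].

Definition dimension_group : Prop :=
  [/\ is_pogroup, directed, unperforated & riesz_interpolation].

Definition order_ideal (I : G -> Prop) : Prop :=
  [/\ I 0, (forall x y, I x -> I y -> I (x - y)),
      (forall a b, P a -> leG a b -> I b -> I a) &
      (forall x, I x -> exists a b, [/\ I a, P a, I b, P b & x = a - b])].

Definition simple_pog : Prop :=
  forall I, order_ideal I -> (forall x, I x -> x = 0) \/ (forall x, I x).

Definition order_unit (u : G) : Prop := P u /\ forall g, exists n : nat, leG g (u *+ n).

(* infinitesimals: -eps u <= g <= eps u for every rational eps = p/q > 0,
   i.e. -(p u) <= q g <= p u *)
Definition Inf (u : G) (g : G) : Prop :=
  forall p q : nat, (0 < p)%N -> (0 < q)%N ->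
    leG (g *+ q) (u *+ p) /\ leG (- (u *+ p)) (g *+ q).

(* rank of G/I (dim_Q (G/I (x) Q)) = maximal number of elements of G that are
   Z-linearly independent modulo I *)
Definition indep_mod (I : G -> Prop) (k : nat) (g : 'I_k -> G) : Prop :=
  forall c : 'I_k -> int, I (\sum_(i < k) g i *~ c i) -> forall i, c i = 0.

Definition rank_quot_eq (I : G -> Prop) (k : nat) : Prop :=
  (exists g : 'I_k -> G, indep_mod I g) /\ (forall g : 'I_k.+1 -> G, ~ indep_mod I g).

Definition quot_fg (I : G -> Prop) : Prop :=
  exists (k : nat) (s : 'I_k -> G), forall g, exists c : 'I_k -> int,
    I (g - \sum_(i < k) s i *~ c i).

Variable R : realType.

Definition state (u : G) (s : G -> R) : Prop :=
  [/\ (forall x y, s (x + y) = s x + s y), (forall x, P x -> 0 <= s x) & s u = 1].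

Definition pure_state (u : G) (s : G -> R) : Prop :=
  state u s /\
  forall (s1 s2 : G -> R) (t : R), state u s1 -> state u s2 -> 0 < t -> t < 1 ->
    (forall g, s g = t * s1 g + (1 - t) * s2 g) -> s1 = s /\ s2 = s.

Definition exactly_n_pure_states (u : G) (n : nat) : Prop :=
  exists f : 'I_n -> (G -> R), injective f /\ forall s, pure_state u s <-> exists i, s = f i.

(* (G,u) irrationally miscible: every g in J(G,u) has rational constant value *)
Definition irrationally_miscible (u : G) : Prop :=
  forall g : G, (forall s1 s2, state u s1 -> state u s2 -> s1 g = s2 g) ->
    forall s, state u s -> exists q : rat, s g = ratr q.

Definition globally_irrationally_miscible : Prop :=
  forall v, order_unit v -> irrationally_miscible v.

End PoGroups.

From HB Require Import structures.
From mathcomp Require Import all_boot all_order all_algebra.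
From mathcomp Require Import boolp classical_sets reals.
From mathcomp Require Import ring lra.
Import Order.TTheory GRing.Theory Num.Theory.
Set Implicit Arguments. Unset Strict Implicit. Unset Printing Implicit Defensive.
Local Open Scope ring_scope.

(* Let [v] be an order unit and [g] have constant value [c] on all states of [(G, v)];
   rescaling the [n] pure traces [f_i] of [(G, u)] gives [f_i g = c * f_i v], and we show
   that [c] is rational. Distinct pure traces are disjoint, so Riesz decomposition yields
   [0 <= x_j <= u] on which [f_j] is almost [1] and the other [f_i] almost [0]; the matrix
   [A = (f_i x_j)] is then invertible. The trace vector [y |-> (f_i y)_i] kills [Inf(G)].
   If [G / Inf(G)] has rank [n], the trace vectors of [v] and of [g] are rational
   combinations of the rows of [A], which forces [c] to be rational.
   If the rank is [n + 1] and [c] is irrational, some element [w] has trace vector an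
   irrational multiple of an integral combination [cc A] of the rows; pairing trace
   vectors with [A^-1 l] for an integral [l] orthogonal to [cc] then gives a functional
   that is rational-valued on [G], hence (finite generation) a nonzero integer-valued
   combination of the [f_i]. Its maxima on the intervals [[0, x]] show that the positive
   cone of the simple group is generated by one element, so all states coincide: this
   contradicts [n > 1]. *)

Section OrderedGroup.
Variables (G : zmodType) (P : G -> Prop).
Hypothesis dimG : dimension_group P.

Lemma cone0 : P 0. Proof. by case: dimG => -[]. Qed.

Lemma coneD x y : P x -> P y -> P (x + y).
Proof. by case: dimG => -[] _ + _ _ _ _; apply. Qed.

Lemma cone_antisym x : P x -> P (- x) -> x = 0.
Proof. by case: dimG => -[] _ _ + _ _ _; apply. Qed.

Lemma cone_directed g : exists a b, [/\ P a, P b & g = a - b].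
Proof. by case: dimG => _ + _ _; apply. Qed.

Lemma coneMn x k : P x -> P (x *+ k).
Proof.
move=> Px; elim: k => [|k IHk]; first by rewrite mulr0n; apply: cone0.
by rewrite mulrS; apply: coneD.
Qed.

Lemma leG0 x : P x -> leG P 0 x. Proof. by rewrite /leG subr0. Qed.

Lemma leG_refl x : leG P x x. Proof. by rewrite /leG subrr; apply: cone0. Qed.

Lemma leG_trans x y z : leG P x y -> leG P y z -> leG P x z.
Proof. by move=> Pyx Pzy; have := coneD Pzy Pyx; rewrite /leG addrA subrK. Qed.

Lemma leGD a b c d : leG P a b -> leG P c d -> leG P (a + c) (b + d).
Proof. by rewrite /leG opprD addrACA; apply: coneD. Qed.

Lemma leGN a b : leG P a b -> leG P (- b) (- a).
Proof. by rewrite /leG opprK addrC. Qed.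

Lemma riesz_decomposition x a b : P x -> P a -> P b -> P (a + b - x) ->
  exists x1, [/\ P x1, P (a - x1), P (x - x1) & P (b - (x - x1))].
Proof.
move=> Px Pa Pb Pabx; case: dimG => _ _ _ /(_ 0 (x - b) a x).
rewrite /leG !subr0 !opprB subrKC [a + (b - x)]addrA => /(_ Pa Px Pabx Pb).
case=> x1; rewrite subr0 => -[Px1 Px1b Pax1 Pxx1]; exists x1; split => //.
by rewrite opprB addrCA.
Qed.

Definition atom (p : G) := forall y, P y -> P (p - y) -> y = 0 \/ y = p.

Lemma atom_multiples p m x : P p -> atom p -> P x -> P (p *+ m - x) ->
  exists k, x = p *+ k.
Proof.
move=> Pp atom_p; elim: m x => [|m IHm] x Px.
  rewrite mulr0n sub0r => Pxn; exists 0%N.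
  by rewrite mulr0n; apply: cone_antisym.
rewrite mulrS => Hx; have [x1 [P1 P2 P3 P4]] := riesz_decomposition Px Pp (coneMn m Pp) Hx.
have [k Hk] := IHm _ P3 P4.
case: (atom_p _ P1 P2) => E; rewrite {}E in Hk.
  by exists k; rewrite -Hk subr0.
by exists k.+1; rewrite mulrS -Hk addrC subrK.
Qed.

Lemma simple_order_unit x : simple_pog P -> P x -> x <> 0 -> order_unit P x.
Proof.
move=> simpleG Px x_neq0; split => //.
have Nxk_le k : leG P (- (x *+ k)) 0 by rewrite -oppr0; apply/leGN/leG0/coneMn.
have Nxk_le_pos k a : P a -> leG P (- (x *+ k)) a.
  by move=> Pa; apply: leG_trans (Nxk_le k) (leG0 Pa).
pose I g := exists k, leG P (- (x *+ k)) g /\ leG P g (x *+ k).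
have I_ideal : order_ideal P I.
  split.
  - by exists 0%N; rewrite mulr0n oppr0; split; apply: leG_refl.
  - move=> a b [k [Ha1 Ha2]] [l [Hb1 Hb2]]; exists (k + l)%N.
    rewrite mulrnDr opprD; split; apply: leGD => //; first exact: leGN.
    by move/leGN: Hb1; rewrite opprK.
  - move=> a b Pa Hab [k [_ Hk]]; exists k; split; last exact: leG_trans Hab Hk.
    exact: Nxk_le_pos.
  - move=> g [k [Hk1 Hk2]]; have Pgxk : P (g + x *+ k) by move: Hk1; rewrite /leG opprK.
    exists (g + x *+ k), (x *+ k); split; rewrite ?addrK //; last exact: coneMn.
      exists (k + k)%N; split; first exact: Nxk_le_pos.
      by rewrite mulrnDr; apply: leGD => //; apply: leG_refl.
    by exists k; split; [apply/Nxk_le_pos/coneMn | apply: leG_refl].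
case: (simpleG _ I_ideal) => [I0|Iall].
  case: x_neq0; apply: I0; exists 1%N.
  by split; [apply: Nxk_le_pos | rewrite mulr1n; apply: leG_refl].
by move=> g; have [k [_ Hk]] := Iall g; exists k.
Qed.

End OrderedGroup.

Section AdditiveMaps.
Variables (G V : zmodType) (k : G -> V).
Hypothesis kD : {morph k : x y / x + y}.

Lemma additive0 : k 0 = 0.
Proof. by apply: (addrI (k 0)); rewrite -kD !addr0. Qed.

Lemma additiveN x : k (- x) = - k x.
Proof. by apply/eqP; rewrite -addr_eq0 -kD addNr additive0. Qed.

Lemma additiveB x y : k (x - y) = k x - k y.
Proof. by rewrite kD additiveN. Qed.

Lemma additiveMn x m : k (x *+ m) = k x *+ m.
Proof. by elim: m => [|m IHm]; rewrite ?mulr0n ?additive0 // !mulrS kD IHm. Qed.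

Lemma additiveMz x (z : int) : k (x *~ z) = k x *~ z.
Proof. by case: z => m; rewrite ?NegzE ?mulrNz ?additiveN additiveMn. Qed.

Lemma additive_sum (I : Type) (r : seq I) (F : I -> G) :
  k (\sum_(i <- r) F i) = \sum_(i <- r) k (F i).
Proof. by elim: r => [|a r IHr]; rewrite ?big_nil ?additive0 // !big_cons kD IHr. Qed.

End AdditiveMaps.

Section PositiveFunctionals.
Variables (G : zmodType) (P : G -> Prop) (R : realType).
Hypothesis dimG : dimension_group P.

Definition positive_on (k : G -> R) := forall x, P x -> 0 <= k x.

Section Functional.
Variable k : G -> R.
Hypotheses (kD : {morph k : x y / x + y}) (k_ge0 : positive_on k).

Lemma positive_le a b : leG P a b -> k a <= k b.
Proof. by move=> Hab; rewrite -subr_ge0 -(additiveB kD); apply: k_ge0. Qed.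

Lemma positive_order_unit_gt0 u v : order_unit P v -> 0 < k u -> 0 < k v.
Proof.
move=> [Pv Hv] ku_gt0; have [m Hm] := Hv u.
have := positive_le Hm; rewrite (additiveMn kD) => le_u_v.
by rewrite lt_def k_ge0 // andbT; apply: contraTneq le_u_v => ->; rewrite mul0rn -ltNge.
Qed.

Lemma positive_order_unit_eq0 u : order_unit P u -> k u = 0 -> forall z, k z = 0.
Proof.
move=> [_ Hu] ku0.
have k_cone0 x : P x -> k x = 0.
  move=> Px; have [m Hm] := Hu x; have := positive_le Hm.
  by rewrite (additiveMn kD) ku0 mul0rn => kx_le0; apply/eqP; rewrite eq_le kx_le0 k_ge0.
move=> z; have [a [b [Pa Pb ->]]] := cone_directed dimG z.
by rewrite (additiveB kD) !k_cone0 ?subrr.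
Qed.

End Functional.

Lemma state_additive u (s : G -> R) : state P u s -> {morph s : x y / x + y}. Proof. by case. Qed.
Lemma state_positive u (s : G -> R) : state P u s -> positive_on s. Proof. by case. Qed.
Lemma state_unit u (s : G -> R) : state P u s -> s u = 1. Proof. by case. Qed.

Lemma state_order_unit_gt0 u (s : G -> R) v : state P u s -> order_unit P v -> 0 < s v.
Proof.
move=> [sD s_ge0 su] v_unit; apply: (positive_order_unit_gt0 sD s_ge0 (u := u)) => //.
by rewrite su ltr01.
Qed.

Lemma state_rescale u (s : G -> R) v :
  state P u s -> order_unit P v -> state P v (fun x => s x / s v).
Proof.
move=> [sD s_ge0 su] v_unit; have sv_gt0 := state_order_unit_gt0 (And3 sD s_ge0 su) v_unit.
split=> [x y|x Px|]; first by rewrite sD mulrDl.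
  by apply: divr_ge0; [apply: s_ge0 | apply: ltW].
by rewrite divff ?gt_eqF.
Qed.

Lemma state_Inf0 u (s : G -> R) g : state P u s -> Inf P u g -> s g = 0.
Proof.
move=> [sD s_ge0 su] Hg.
have sg_small q : (0 < q)%N -> `|s g| *+ q <= 1.
  move=> q_gt0; have [Hup Hlow] := Hg 1%N q isT q_gt0.
  have := positive_le sD s_ge0 Hup; have := positive_le sD s_ge0 Hlow.
  rewrite (additiveN sD) !(additiveMn sD) su mulr1n => low up.
  by case: (ler0P (s g)) => _; rewrite ?mulNrn // lerNl.
apply/eqP; rewrite -normr_eq0; apply: contraT => sg_neq0.
have sg_gt0 : 0 < `|s g| by rewrite lt_def sg_neq0 normr_ge0.
pose q := (Num.bound (`|s g|^-1)).+1.
have := sg_small q isT; rewrite leNgt => /negP[].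
rewrite -mulr_natr -ltr_pdivrMl // mulr1.
apply: lt_le_trans (archi_boundP _) _; first by rewrite invr_ge0 normr_ge0.
by rewrite ler_nat.
Qed.

End PositiveFunctionals.

Section ConeExtension.
Variables (G : zmodType) (P : G -> Prop) (R : realType).
Hypothesis dimG : dimension_group P.
Variable k : G -> R.
Hypothesis kD : forall x y, P x -> P y -> k (x + y) = k x + k y.

Lemma cone_dominates z : exists a, P a /\ P (a - z).
Proof.
have [a [b [Pa Pb ->]]] := cone_directed dimG z.
by exists a; rewrite opprB subrKC.
Qed.

Definition dominating z : G := projT1 (cid (cone_dominates z)).

Lemma dominatingP z : P (dominating z) /\ P (dominating z - z).
Proof. exact: projT2 (cid (cone_dominates z)). Qed.

Definition cone_extension z := k (dominating z) - k (dominating z - z).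

Lemma cone_extensionE x : P x -> cone_extension x = k x.
Proof.
move=> Px; have [_ Pax] := dominatingP x.
by rewrite /cone_extension -{1}(subrK x (dominating x)) kD // addrC addKr.
Qed.

Lemma cone_extensionD : {morph cone_extension : x y / x + y}.
Proof.
move=> z1 z2; rewrite /cone_extension.
have [A1 B1] := dominatingP z1; have [A2 B2] := dominatingP z2.
have [A B] := dominatingP (z1 + z2).
set a1 := dominating z1 in A1 B1 *; set a2 := dominating z2 in A2 B2 *.
set a := dominating (z1 + z2) in A B *.
have E : a + (a1 - z1) + (a2 - z2) = a1 + a2 + (a - (z1 + z2)).
  by rewrite opprD !addrA [a + a1 - z1 + a2]addrAC [a1 + a2 + a]addrC !addrA.
have := congr1 k E.
rewrite (kD (coneD dimG A B1) B2) (kD A B1) (kD (coneD dimG A1 A2) B) (kD A1 A2).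
lra.
Qed.

End ConeExtension.

Section Meet.
Variables (G : zmodType) (P : G -> Prop) (R : realType).
Hypothesis dimG : dimension_group P.
Variables f g : G -> R.
Hypotheses (fD : {morph f : x y / x + y}) (gD : {morph g : x y / x + y}).
Hypotheses (f_ge0 : positive_on P f) (g_ge0 : positive_on P g).
Local Open Scope classical_set_scope.

Definition split_values x := [set f y + g (x - y) | y in [set y | P y /\ P (x - y)]].

Definition meet_cone x := inf (split_values x).

Lemma meet_cone_le x y : P y -> P (x - y) -> meet_cone x <= f y + g (x - y).
Proof.
move=> Py Pxy; apply: ge_inf; last by exists y.
by exists 0 => _ [z [Pz Pxz] <-]; rewrite addr_ge0 ?f_ge0 ?g_ge0.
Qed.

Lemma meet_cone_ge x r : P x ->
  (forall y, P y -> P (x - y) -> r <= f y + g (x - y)) -> r <= meet_cone x.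
Proof.
move=> Px Hr; apply: lb_le_inf => [|_ [y [Py Pxy] <-]]; last exact: Hr.
by exists (f 0 + g (x - 0)), 0; split; rewrite ?subr0 //; apply: cone0 dimG.
Qed.

Lemma meet_cone_ge0 x : P x -> 0 <= meet_cone x.
Proof. by move=> Px; apply: meet_cone_ge => // y Py Pxy; rewrite addr_ge0 ?f_ge0 ?g_ge0. Qed.

Lemma meet_cone_lef x : P x -> meet_cone x <= f x.
Proof.
move=> Px; have := @meet_cone_le x x Px; rewrite subrr (additive0 gD) addr0.
by apply; apply: cone0 dimG.
Qed.

Lemma meet_cone_leg x : P x -> meet_cone x <= g x.
Proof.
move=> Px; have := @meet_cone_le x 0; rewrite (additive0 fD) add0r subr0.
by apply=> //; apply: cone0 dimG.
Qed.

Lemma meet_coneD x1 x2 : P x1 -> P x2 -> meet_cone (x1 + x2) = meet_cone x1 + meet_cone x2.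
Proof.
move=> P1 P2; have P12 := coneD dimG P1 P2; apply/eqP; rewrite eq_le; apply/andP; split.
- rewrite -lerBlDr; apply: meet_cone_ge => // y1 Py1 Pxy1.
  rewrite lerBlDr -lerBlDl; apply: meet_cone_ge => // y2 Py2 Pxy2.
  rewrite lerBlDl; apply: le_trans (meet_cone_le (coneD dimG Py1 Py2) _) _.
    by have := coneD dimG Pxy1 Pxy2; rewrite opprD addrACA.
  by rewrite opprD addrACA fD (gD (x1 - y1)); lra.
- apply: meet_cone_ge => // y Py Pxy.
  have [y1 [Q1 Q2 Q3 Q4]] := riesz_decomposition dimG Py P1 P2 Pxy.
  have E : x1 + x2 - y = (x1 - y1) + (x2 - (y - y1)).
    by rewrite opprB addrACA addKr.
  have Ey : y = y1 + (y - y1) by rewrite subrKC.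
  have := meet_cone_le Q1 Q2; have := meet_cone_le Q3 Q4.
  by rewrite E (gD (x1 - y1)) {3}Ey (fD y1); lra.
Qed.

End Meet.

Section PureStates.
Variables (G : zmodType) (P : G -> Prop) (R : realType).
Hypothesis dimG : dimension_group P.
Variable u : G.
Hypothesis u_unit : order_unit P u.

(* For [0 < t := H u < 1], [f = t (H / t) + (1 - t) ((f - H) / (1 - t))] is a convex
   combination of two states. *)
Lemma pure_state_dominated (f H : G -> R) : pure_state P u f -> {morph H : x y / x + y} ->
  (forall x, P x -> 0 <= H x <= f x) -> forall z, H z = H u * f z.
Proof.
move=> [[fD f_ge0 fu] f_pure] HD H_le; have Pu : P u by case: u_unit.
have H_ge0 : positive_on P H by move=> x /H_le /andP[].
have fH_ge0 : positive_on P (fun z => f z - H z) by move=> x /H_le /andP[_]; rewrite subr_ge0.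
have fHD : {morph (fun z => f z - H z) : x y / x + y} by move=> x y; rewrite fD HD addrACA opprD.
have /andP[t_ge0 t_le1] := H_le u Pu; rewrite fu in t_le1.
set t := H u in t_ge0 t_le1 *.
have [t0|t_neq0] := eqVneq t 0.
  by move=> z; rewrite t0 mul0r; exact: (positive_order_unit_eq0 dimG HD H_ge0 u_unit t0).
have [t1|t_neq1] := eqVneq t 1.
  have fHu0 : f u - H u = 0 by rewrite fu -/t t1 subrr.
  move=> z; rewrite t1 mul1r; apply/eqP; rewrite eq_sym -subr_eq0; apply/eqP.
  exact: (positive_order_unit_eq0 dimG fHD fH_ge0 u_unit fHu0).
have t_gt0 : 0 < t by rewrite lt_def t_neq0.
have t_lt1 : t < 1 by rewrite lt_def eq_sym t_neq1.
have t1_gt0 : 0 < 1 - t by rewrite subr_gt0.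
have s1 : state P u (fun z => H z / t).
  split=> [x y|x Px|]; rewrite ?HD ?mulrDl ?divff //.
  by apply: divr_ge0; [apply: H_ge0 | apply: ltW].
have s2 : state P u (fun z => (f z - H z) / (1 - t)).
  split=> [x y|x Px|]; first by rewrite -mulrDl -fHD.
    by apply: divr_ge0; [apply: fH_ge0 | apply: ltW].
  by rewrite fu divff ?gt_eqF.
have decomp z : f z = t * (H z / t) + (1 - t) * ((f z - H z) / (1 - t)).
  by rewrite [t * _]mulrCA [(1 - t) * _]mulrCA !mulfV ?gt_eqF // !mulr1 subrKC.
have [s1_eq _] := f_pure _ _ _ s1 s2 t_gt0 t_lt1 decomp.
by move=> z; rewrite -s1_eq mulrC divfK ?gt_eqF.
Qed.

Lemma pure_states_disjoint (f g : G -> R) : pure_state P u f -> pure_state P u g -> f <> g ->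
  forall e : R, 0 < e -> exists y, [/\ P y, P (u - y) & f y + g (u - y) < e].
Proof.
move=> f_pure g_pure fg e e_gt0; apply: contrapT => small_none.
have [[fD f_ge0 fu] _] := f_pure; have [[gD g_ge0 _] _] := g_pure.
have Pu : P u by case: u_unit.
pose m := meet_cone P f g; pose H := cone_extension dimG m.
have mD x y : P x -> P y -> m (x + y) = m x + m y by apply: meet_coneD.
have HE : forall x, P x -> H x = m x := cone_extensionE dimG mD.
have HD : {morph H : x y / x + y} := cone_extensionD dimG mD.
have e_le_mu : e <= m u.
  apply: meet_cone_ge => // y Py Puy; rewrite leNgt; apply/negP => lt_e.
  by apply: small_none; exists y.
have Hf z : H z = H u * f z.
  apply: (pure_state_dominated f_pure HD) => x Px.
  by rewrite HE // meet_cone_ge0 ?meet_cone_lef.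
have Hg z : H z = H u * g z.
  apply: (pure_state_dominated g_pure HD) => x Px.
  by rewrite HE // meet_cone_ge0 ?meet_cone_leg.
apply: fg; apply/funext => z; apply: (mulfI (x := H u)); last by rewrite -Hf -Hg.
by rewrite HE // gt_eqF // (lt_le_trans e_gt0).
Qed.

End PureStates.

Section Indicators.
Variables (G : zmodType) (P : G -> Prop) (R : realType).
Hypothesis dimG : dimension_group P.
Variables (u : G) (n : nat) (f : 'I_n -> G -> R).
Hypotheses (u_unit : order_unit P u) (f_pure : forall i, pure_state P u (f i)).
Hypothesis f_inj : injective f.

Let f_state i : state P u (f i) := (f_pure i).1.

(* Induction on [s], halving [e]: split [0 <= x <= u] along a nearly disjoint splitting
   [u = y + (u - y)] of the next state [f j] against [f i] (Riesz decomposition). *)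
Lemma indicator_seq i (s : seq 'I_n) : i \notin s -> forall e : R, 0 < e ->
  exists x, [/\ P x, P (u - x), f i (u - x) < e & forall j, j \in s -> f j x < e].
Proof.
have Pu : P u by case: u_unit.
have fD j := state_additive (f_state j); have f_ge0 j := state_positive (f_state j).
have f_le j a b : P (b - a) -> f j a <= f j b.
  by move=> Pba; exact: (positive_le (fD j) (f_ge0 j) Pba).
elim: s => [_ e e_gt0|j s IHs].
  by exists u; rewrite subrr (additive0 (fD i)); split => //; apply: cone0 dimG.
rewrite in_cons negb_or eq_sym => /andP[j_neq_i i_notin_s] e e_gt0.
have e2_gt0 : 0 < e / 2 by rewrite divr_gt0.
have [x [Px Pux fi_ux fs_x]] := IHs i_notin_s _ e2_gt0.
have fji : f j <> f i by move/f_inj/eqP; apply/negP.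
have [y [Py Puy small_y]] := pure_states_disjoint dimG u_unit (f_pure j) (f_pure i) fji e2_gt0.
have Pyx : P (y + (u - y) - x) by rewrite subrKC.
have [x1 [P1 P2 P3 P4]] := riesz_decomposition dimG Px Py Puy Pyx.
have Eux1 : u - x1 = (u - x) + (x - x1) by rewrite addrA subrK.
exists x1; split => //.
- by rewrite Eux1; exact: (coneD dimG Pux P3).
- rewrite Eux1 (fD i); have := f_le i _ _ P4; have := f_ge0 j y Py; lra.
- move=> k; rewrite in_cons => /orP[/eqP -> | k_in_s].
    by have := f_le j _ _ P2; have := f_ge0 i (u - y) Puy; lra.
  by have := f_le k _ _ P3; have := fs_x k k_in_s; lra.
Qed.

Lemma indicator i (e : R) : 0 < e ->
  exists x, [/\ P x, P (u - x), f i (u - x) < e & forall j, j != i -> f j x < e].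
Proof.
move=> e_gt0.
have [|x [Px Pux fi_small fj_small]] := @indicator_seq i (enum [pred j | j != i]) _ e e_gt0.
  by rewrite mem_enum inE eqxx.
by exists x; split => // j j_neq_i; apply: fj_small; rewrite mem_enum.
Qed.

End Indicators.

(* Look at the largest coordinate of a vector in the left kernel. *)
Lemma near_identity_row_free (R : realType) n (A : 'M[R]_n) (e : R) :
  0 <= e -> e * (n%:R + 1) < 1 ->
  (forall i, 1 - e <= A i i) -> (forall i j, j != i -> `|A j i| <= e) -> row_free A.
Proof.
move=> e_ge0 e_small A_diag A_off; apply/inj_row_free => v vA0.
case: n => [|n] in A e_small A_diag A_off v vA0 *; first exact: thinmx0.
have [i0 _ i0_max] := @arg_maxP _ _ 'I_n.+1 ord0 xpredT (fun i => `|v 0 i|) isT.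
set m := `|v 0 i0| in i0_max.
have e_lt1 : e < 1 by apply: le_lt_trans e_small; rewrite ler_peMr // lerDr.
have Ai0_ge0 : 0 <= A i0 i0 by apply: le_trans (A_diag i0); rewrite subr_ge0 ltW.
have Evi0 : v 0 i0 * A i0 i0 = - \sum_(j | j != i0) v 0 j * A j i0.
  apply/eqP; rewrite -addr_eq0.
  by move/rowP: vA0 => /(_ i0); rewrite !mxE (bigD1 i0) //= => ->.
have m_diag : m * (1 - e) <= m * A i0 i0 by apply: ler_wpM2l; [apply: normr_ge0 | apply: A_diag].
have m_off : m * A i0 i0 <= m * e *+ n.+1.
  rewrite -[A i0 i0]ger0_norm // -normrM Evi0 normrN.
  apply: le_trans (ler_norm_sum _ _ _) _.
  apply: (@le_trans _ _ (\sum_(j | j != i0) m * e)).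
    apply: ler_sum => j j_neq; rewrite normrM.
    by apply: ler_pM; [apply: normr_ge0 | apply: normr_ge0 | apply: i0_max | apply: A_off].
  have -> : m * e *+ n.+1 = \sum_(j < n.+1) m * e by rewrite sumr_const card_ord.
  by rewrite [X in _ <= X](bigD1 i0) //= lerDr mulr_ge0 ?normr_ge0.
have m_le0 : m <= 0.
  have := le_trans m_diag m_off; rewrite -mulr_natr -mulrA; apply: contraLR.
  rewrite -!ltNge => m_gt0; rewrite ltr_pM2l //; move: e_small; rewrite mulrDr mulr1; lra.
apply/rowP => j; rewrite mxE; apply/eqP; rewrite -normr_eq0 eq_le normr_ge0 andbT.
exact: le_trans (i0_max j isT) m_le0.
Qed.

Definition is_rat (R : realType) (x : R) := exists q : rat, x = ratr q.

Section Rationals.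
Variable R : realType.

Lemma is_rat_int (z : int) : is_rat (z%:~R : R). Proof. by exists z%:~R; rewrite ratr_int. Qed.

Lemma is_ratM (x y : R) : is_rat x -> is_rat y -> is_rat (x * y).
Proof. by move=> [a ->] [b ->]; exists (a * b); rewrite rmorphM. Qed.

Lemma is_ratV (x : R) : is_rat x -> is_rat x^-1.
Proof. by move=> [a ->]; exists a^-1; rewrite fmorphV. Qed.

Lemma is_rat_int_div (a b : int) : is_rat (a%:~R / b%:~R : R).
Proof. by apply: is_ratM; [|apply: is_ratV]; apply: is_rat_int. Qed.

End Rationals.

Lemma cyclic_cone_states_eq (G : zmodType) (P : G -> Prop) (R : realType) (p u : G)
    (s1 s2 : G -> R) : dimension_group P -> P u ->
  (forall x, P x -> exists k, x = p *+ k) -> state P u s1 -> state P u s2 -> s1 = s2.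
Proof.
move=> dimG Pu p_gen [s1D _ s1u] [s2D _ s2u].
have [ku u_eq] := p_gen u Pu.
have sp_ku (s : G -> R) : {morph s : x y / x + y} -> s u = 1 -> s p *+ ku = 1.
  by move=> sD su; rewrite -(additiveMn sD) -u_eq.
have ku_neq0 : ku != 0%N.
  by apply: contra_eqN (sp_ku _ s1D s1u) => /eqP ->; rewrite mulr0n eq_sym oner_eq0.
have s12p : s1 p = s2 p.
  by apply: (mulIf (x := ku%:R)); rewrite ?pnatr_eq0 // !mulr_natr !sp_ku.
have s12_cone x : P x -> s1 x = s2 x.
  by move=> /p_gen[k ->]; rewrite (additiveMn s1D) (additiveMn s2D) s12p.
apply/funext => z; have [a [b [Pa Pb ->]]] := cone_directed dimG z.
by rewrite (additiveB s1D) (additiveB s2D) !s12_cone.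
Qed.

Lemma Rint_ge0_natr (R : realType) (x : R) : x \is a Rint -> 0 <= x -> exists k : nat, x = k%:R.
Proof.
move=> /RintP[[k|k] ->]; first by exists k.
by rewrite NegzE mulrNz oppr_ge0 lern0.
Qed.

Section IntegralFunctional.
Variables (G : zmodType) (P : G -> Prop) (R : realType).
Hypotheses (dimG : dimension_group P) (simpleG : simple_pog P).
Variable M : G -> R.
Hypotheses (MD : {morph M : x y / x + y}) (M_int : forall y, M y \is a Rint).
Hypothesis M_bounded : forall x, P x -> exists K, forall y, P y -> P (x - y) -> M y <= K.
Local Open Scope classical_set_scope.

Definition interval_values x := [set M y | y in [set y | P y /\ P (x - y)]].

Definition interval_sup x := sup (interval_values x).

Lemma interval_values_sup x : P x -> has_sup (interval_values x).
Proof.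
move=> Px; have [K HK] := M_bounded Px; split.
  by exists (M 0), 0 => //; split; [apply: cone0 dimG | rewrite subr0].
by exists K => _ [y [Py Pxy] <-]; apply: HK.
Qed.

Lemma interval_sup_ge x y : P x -> P y -> P (x - y) -> M y <= interval_sup x.
Proof. by move=> Px Py Pxy; apply: (ub_le_sup (interval_values_sup Px).2); exists y. Qed.

(* An integer-valued bounded set attains its supremum. *)
Lemma interval_sup_attained x : P x -> exists y, [/\ P y, P (x - y) & M y = interval_sup x].
Proof.
move=> Px; have hs := interval_values_sup Px.
have [_ [y [Py Pxy] <-] sup_lt] := sup_adherent ltr01 hs.
exists y; split => //; apply/eqP; rewrite eq_le interval_sup_ge //=.
apply: (ge_sup hs.1) => _ [y' [Py' Pxy'] <-].
rewrite -(Rint_ltr_addr1 (M_int y') (M_int y)).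
by apply: le_lt_trans (interval_sup_ge Px Py' Pxy') _; rewrite -ltrBlDr.
Qed.

Lemma interval_sup_int x : P x -> interval_sup x \is a Rint.
Proof. by move=> /interval_sup_attained[y [_ _ <-]]. Qed.

Lemma interval_sup_ge0 x : P x -> 0 <= interval_sup x.
Proof.
by move=> Px; rewrite -(additive0 MD) interval_sup_ge ?subr0 //; apply: cone0 dimG.
Qed.

Lemma interval_supD x1 x2 : P x1 -> P x2 ->
  interval_sup (x1 + x2) = interval_sup x1 + interval_sup x2.
Proof.
move=> P1 P2; have P12 := coneD dimG P1 P2.
apply/eqP; rewrite eq_le; apply/andP; split.
- have [y [Py Pxy <-]] := interval_sup_attained P12.
  have [z [Pz Pxz Pyz Pxyz]] := riesz_decomposition dimG Py P1 P2 Pxy.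
  by rewrite -(subrKC z y) MD lerD ?interval_sup_ge.
- have [y1 [Py1 Pxy1 <-]] := interval_sup_attained P1.
  have [y2 [Py2 Pxy2 <-]] := interval_sup_attained P2.
  rewrite -MD interval_sup_ge //; first exact: (coneD dimG Py1 Py2).
  by have := coneD dimG Pxy1 Pxy2; rewrite opprD addrACA.
Qed.

Lemma interval_sup0 : interval_sup 0 = 0.
Proof.
have P0 := cone0 dimG.
by apply: (addrI (interval_sup 0)); rewrite -interval_supD ?addr0.
Qed.

Lemma interval_supMn x k : P x -> interval_sup (x *+ k) = interval_sup x *+ k.
Proof.
move=> Px; elim: k => [|k IHk]; first by rewrite !mulr0n interval_sup0.
by rewrite !mulrS interval_supD ?IHk //; apply: coneMn.
Qed.

Lemma interval_sup_le x x' : P x -> P (x' - x) -> interval_sup x <= interval_sup x'.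
Proof.
by move=> Px Pxx; rewrite -(subrKC x x') interval_supD // lerDl; apply: interval_sup_ge0.
Qed.

Hypothesis M_pos : exists x0, P x0 /\ 0 < M x0.

Lemma interval_sup_order_unit_gt0 v : order_unit P v -> 0 < interval_sup v.
Proof.
move=> [Pv v_unit]; have [x0 [Px0 Mx0]] := M_pos; have [m Hm] := v_unit x0.
have sup_vm_gt0 : 0 < interval_sup v *+ m.
  rewrite -interval_supMn //; apply: lt_le_trans Mx0 (le_trans _ (interval_sup_le Px0 Hm)).
  by rewrite interval_sup_ge // subrr; apply: cone0 dimG.
rewrite lt_def interval_sup_ge0 // andbT.
by apply: contraTneq sup_vm_gt0 => ->; rewrite mul0rn ltxx.
Qed.

Lemma cyclic_cone_of_int_functional : exists p, P p /\ forall x, P x -> exists k, x = p *+ k.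
Proof.
have sup_gt0 y : P y -> y <> 0 -> 0 < interval_sup y.
  by move=> Py y_neq0; apply/interval_sup_order_unit_gt0/simple_order_unit.
pose Q k := `[< exists y, [/\ P y, y <> 0 & interval_sup y = k%:R] >].
have [k0 Qk0] : exists k, Q k.
  have [x0 [Px0 Mx0]] := M_pos.
  have x0_neq0 : x0 <> 0 by move=> x00; rewrite x00 (additive0 MD) ltxx in Mx0.
  have [k Ek] := Rint_ge0_natr (interval_sup_int Px0) (interval_sup_ge0 Px0).
  by exists k; apply/asboolP; exists x0.
case: (ex_minnP (ex_intro Q k0 Qk0)) => d /asboolP[p [Pp p_neq0 Ep]] d_min.
have d_le y : P y -> y <> 0 -> d%:R <= interval_sup y.
  move=> Py y_neq0; have [k Ek] := Rint_ge0_natr (interval_sup_int Py) (interval_sup_ge0 Py).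
  by rewrite Ek ler_nat; apply: d_min; apply/asboolP; exists y.
have d_gt0 : 0 < (d%:R : R) by rewrite -Ep sup_gt0.
have p_atom : atom P p.
  move=> y Py Ppy; have [->|y_neq0] := pselect (y = 0); first by left.
  have [/eqP|py_neq0] := pselect (p - y = 0); first by rewrite subr_eq0 => /eqP ->; right.
  have := lerD (d_le _ Py y_neq0) (d_le _ Ppy py_neq0).
  by rewrite -interval_supD // subrKC Ep gerDl leNgt d_gt0.
exists p; split => // x Px; have [_ p_unit] := simple_order_unit dimG simpleG Pp p_neq0.
by have [m Hm] := p_unit x; exact: (atom_multiples dimG Pp p_atom Px Hm).
Qed.

End IntegralFunctional.

Section Dependence.
Variables (G : zmodType) (I : G -> Prop).

Definition extend_family k (h : 'I_k -> G) (y : G) (i : 'I_k.+1) : G :=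
  if unlift ord_max i is Some j then h j else y.

Lemma extend_family_sum k (h : 'I_k -> G) y (c : 'I_k.+1 -> int) :
  \sum_i extend_family h y i *~ c i = \sum_i h i *~ c (lift ord_max i) + y *~ c ord_max.
Proof.
rewrite big_ord_recr /=; congr (_ + _); last by rewrite /extend_family unlift_none.
apply: eq_bigr => i _; have -> : widen_ord (leqnSn k) i = lift ord_max i.
  by apply: val_inj; rewrite /= /bump leqNgt ltn_ord.
by rewrite /extend_family liftK.
Qed.

Lemma not_indep_extend k (h : 'I_k -> G) y : ~ indep_mod I (extend_family h y) ->
  exists c cy, ((exists j, c j != 0) \/ cy != 0) /\ I (\sum_i h i *~ c i + y *~ cy).
Proof.
move=> /existsNP[c /not_implyP[Ic /existsNP[i ci_neq0]]].
exists (fun j => c (lift ord_max j)), (c ord_max); split; last by rewrite -extend_family_sum.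
have [->|] := eqVneq ord_max i; first by right; apply/eqP.
by case/unlift_some => j i_eq _; left; exists j; rewrite -i_eq; apply/eqP.
Qed.

End Dependence.

Lemma fg_common_denominator (G : zmodType) (I : G -> Prop) (R : realType) (ell : G -> R) :
    {morph ell : x y / x + y} -> (forall y, I y -> ell y = 0) -> quot_fg I ->
  (forall y, exists b : int, b != 0 /\ ell y * b%:~R \is a Rint) ->
  exists N : int, N != 0 /\ forall y, ell y * N%:~R \is a Rint.
Proof.
move=> ellD ell_I [k [s s_gen]] ell_rat.
have /all_sig[b bP] := fun i => cid (ell_rat (s i)).
exists (\prod_i b i); split; first by apply/prodf_neq0 => i _; case: (bP i).
move=> y; have [c Hc] := s_gen y.
have -> : ell y = \sum_i ell (s i) *~ c i.
  move/ell_I/eqP: Hc; rewrite (additiveB ellD) (additive_sum ellD) subr_eq0 => /eqP ->.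
  by apply: eq_bigr => i _; rewrite (additiveMz ellD).
rewrite mulr_suml; apply: rpred_sum => i _; rewrite mulrzAl; apply: rpredMz.
by rewrite (bigD1 i) //= intrM mulrA; apply: rpredM; [case: (bP i) | apply: RintC].
Qed.

Lemma int_orthogonal n (c : 'I_n -> int) : (1 < n)%N ->
  exists l : 'I_n -> int, (exists j, l j != 0) /\ \sum_j c j * l j = 0.
Proof.
move=> n_gt1; pose i0 : 'I_n := Ordinal (ltnW n_gt1); pose i1 : 'I_n := Ordinal n_gt1.
have sum_delta (F : 'I_n -> int) i : \sum_j F j * (j == i)%:Z = F i.
  by rewrite (bigD1 i) //= eqxx mulr1 big1 ?addr0 // => j /negPf ->; rewrite mulr0.
have [c0|c0] := eqVneq (c i0) 0.
  by exists (fun j => (j == i0)%:Z); split; [exists i0; rewrite eqxx | rewrite sum_delta].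
exists (fun j => (j == i0)%:Z * c i1 - (j == i1)%:Z * c i0); split.
  by exists i1; rewrite eqxx /= mul0r sub0r mul1r oppr_eq0.
under eq_bigr => j _ do rewrite mulrBr !mulrA.
by rewrite sumrB -!big_distrl /= !sum_delta mulrC subrr.
Qed.

Section Miscibility.
Variables (R : realType) (G : zmodType) (P : G -> Prop) (u : G) (n : nat).
Hypotheses (dimG : dimension_group P) (simpleG : simple_pog P).
Hypotheses (u_unit : order_unit P u) (n_gt1 : (1 < n)%N).
Variable f : 'I_n -> G -> R.
Hypotheses (f_inj : injective f) (f_pure : forall i, pure_state P u (f i)).

Let f_state i : state P u (f i) := (f_pure i).1.
Let fD i : {morph f i : x y / x + y} := state_additive (f_state i).

Definition trace_vector y : 'rV[R]_n := \row_i f i y.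

Lemma trace_vectorD : {morph trace_vector : x y / x + y}.
Proof. by move=> x y; apply/rowP => i; rewrite !mxE (fD i). Qed.

Lemma trace_vectorMz y (z : int) : trace_vector (y *~ z) = z%:~R *: trace_vector y.
Proof. by apply/rowP => i; rewrite !mxE (additiveMz (fD i)) mulrzl. Qed.

Lemma trace_vector_Inf y : Inf P u y -> trace_vector y = 0.
Proof. by move=> Iy; apply/rowP => i; rewrite !mxE (state_Inf0 (f_state i) Iy). Qed.

Lemma trace_vector_order_unit_neq0 v : order_unit P v -> trace_vector v != 0.
Proof.
move=> v_unit; pose i0 : 'I_n := Ordinal (ltnW n_gt1).
apply/eqP => /rowP/(_ i0); rewrite !mxE => fv0.
by have := state_order_unit_gt0 (f_state i0) v_unit; rewrite fv0 ltxx.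
Qed.

(* Small enough for [near_identity_row_free]: [indicator_eps * (n + 1) < 1]. *)
Definition indicator_eps : R := (n%:R + 1)^-1 / 2.

Lemma indicator_eps_gt0 : 0 < indicator_eps.
Proof. by rewrite divr_gt0 // invr_gt0 ltr_wpDl. Qed.

Definition indicator_elt j : G :=
  projT1 (cid (indicator dimG u_unit f_pure f_inj j indicator_eps_gt0)).

Lemma indicator_eltP j : [/\ P (indicator_elt j), P (u - indicator_elt j),
  f j (u - indicator_elt j) < indicator_eps &
  forall i, i != j -> f i (indicator_elt j) < indicator_eps].
Proof. exact: projT2 (cid (indicator dimG u_unit f_pure f_inj j indicator_eps_gt0)). Qed.

Definition indicator_matrix : 'M[R]_n := \matrix_(j, i) f i (indicator_elt j).
Local Notation A := indicator_matrix.

Lemma row_indicator_matrix j : row j A = trace_vector (indicator_elt j).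
Proof. by apply/rowP => i; rewrite !mxE. Qed.

Lemma indicator_matrix_row_free : row_free A.
Proof.
apply: (@near_identity_row_free _ _ A indicator_eps); first exact: ltW indicator_eps_gt0.
- rewrite /indicator_eps mulrAC mulVf ?mul1r ?invf_lt1 ?ltr1n //.
  by rewrite gt_eqF // ltr_wpDl.
- move=> i; rewrite mxE; have [_ _ + _] := indicator_eltP i.
  by rewrite (additiveB (fD i)) (state_unit (f_state i)); lra.
- move=> i j ji; rewrite mxE; have [Pj _ _ fi_small] := indicator_eltP j.
  by rewrite ger0_norm ?(state_positive (f_state i)) // ltW // fi_small // eq_sym.
Qed.

Definition introw (c : 'I_n -> int) : 'rV[R]_n := \row_j (c j)%:~R.

Lemma introw_eq0 c : introw c *m A = 0 -> forall j, c j = 0.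
Proof.
move=> cA0 j; have /rowP/(_ j) : introw c = 0.
  by apply: (row_free_inj indicator_matrix_row_free); rewrite /= cA0 mul0mx.
by rewrite !mxE => /eqP; rewrite intr_eq0 => /eqP.
Qed.

Lemma trace_vector_indicator_sum c :
  trace_vector (\sum_j indicator_elt j *~ c j) = introw c *m A.
Proof.
apply/rowP => i; rewrite !mxE (additive_sum (fD i)); apply: eq_bigr => j _.
by rewrite (additiveMz (fD i)) !mxE mulrzl.
Qed.

Lemma rank_n_trace_relation : (forall h : 'I_n.+1 -> G, ~ indep_mod (Inf P u) h) -> forall y,
  exists c cy, cy != 0 /\ introw c *m A + cy%:~R *: trace_vector y = 0.
Proof.
move=> rank_le y.
have [c [cy [c_neq0 I_rel]]] := not_indep_extend (rank_le (extend_family indicator_elt y)).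
have rel := trace_vector_Inf I_rel.
rewrite trace_vectorD trace_vector_indicator_sum trace_vectorMz in rel.
exists c, cy; split => //; apply: contraPneq c_neq0 => cy0.
by rewrite cy0 scale0r addr0 in rel; move=> [[j /eqP[]]|]; rewrite ?introw_eq0 ?cy0.
Qed.

Lemma rank_succ_trace_relation : (forall h : 'I_n.+2 -> G, ~ indep_mod (Inf P u) h) -> forall w y,
  exists c cw cy, ((exists j, c j != 0) \/ cw != 0 \/ cy != 0) /\
    introw c *m A + cw%:~R *: trace_vector w + cy%:~R *: trace_vector y = 0.
Proof.
move=> rank_le w y.
have [c [cy [c_neq0 I_rel]]] :=
  not_indep_extend (rank_le (extend_family (extend_family indicator_elt w) y)).
have rel := trace_vector_Inf I_rel; rewrite extend_family_sum in rel.
rewrite !trace_vectorD trace_vector_indicator_sum !trace_vectorMz in rel.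
exists (fun j => c (lift ord_max j)), (c ord_max), cy; split => //.
case: c_neq0 => [[i]|]; last by right; right.
have [<-|/unlift_some[j -> _]] := eqVneq ord_max i; first by right; left.
by left; exists j.
Qed.

Lemma int_combination_cone_eq0 (mu : 'I_n -> R) :
  (forall y, \sum_i f i y * mu i \is a Rint) -> forall x, P x -> \sum_i f i x * mu i = 0.
Proof.
suff no_pos (nu : 'I_n -> R) : (forall y, \sum_i f i y * nu i \is a Rint) ->
    forall x, P x -> ~ 0 < \sum_i f i x * nu i.
  move=> mu_int x Px; apply/eqP; rewrite eq_le !leNgt; apply/andP; split; apply/negP.
    exact: no_pos.
  rewrite -oppr_gt0 -sumrN; under eq_bigr do rewrite -mulrN.
  apply: (no_pos (fun i => - mu i)) Px => y.
  by under eq_bigr do rewrite mulrN; rewrite sumrN rpredN.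
move=> nu_int x0 Px0 x0_pos.
pose M y := \sum_i f i y * nu i.
have MD : {morph M : x y / x + y}.
  by move=> x y; rewrite /M -big_split; apply: eq_bigr => i _; rewrite (fD i) mulrDl.
have M_bounded x : P x -> exists K, forall y, P y -> P (x - y) -> M y <= K.
  move=> Px; exists (\sum_i f i x * `|nu i|) => y Py Pxy; apply: ler_sum => i _.
  apply: le_trans (_ : f i y * `|nu i| <= _).
    by rewrite ler_wpM2l ?(state_positive (f_state i)) ?ler_norm.
  by rewrite ler_wpM2r ?normr_ge0 // (positive_le (fD i) (state_positive (f_state i)) Pxy).
have [p [_ p_gen]] := cyclic_cone_of_int_functional dimG simpleG MD nu_int M_bounded
  (ex_intro _ x0 (conj Px0 x0_pos)).
pose i0 : 'I_n := Ordinal (ltnW n_gt1); pose i1 : 'I_n := Ordinal n_gt1.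
have Pu : P u by case: u_unit.
by have /f_inj/eqP := cyclic_cone_states_eq dimG Pu p_gen (f_state i0) (f_state i1).
Qed.

Definition kernel_weight (l : 'I_n -> int) : 'cV[R]_n := invmx A *m \col_j (l j)%:~R.

Definition kernel_functional l y := \sum_i f i y * kernel_weight l i 0.

Lemma kernel_functionalE l y : kernel_functional l y = (trace_vector y *m kernel_weight l) 0 0.
Proof.
rewrite /kernel_functional [in RHS]mxE.
by apply: eq_bigr => i _; rewrite [trace_vector _ _ _]mxE.
Qed.

Lemma kernel_functionalD l : {morph kernel_functional l : x y / x + y}.
Proof. by move=> x y; rewrite !kernel_functionalE trace_vectorD mulmxDl mxE. Qed.

Lemma kernel_functional_Inf l y : Inf P u y -> kernel_functional l y = 0.
Proof. by move=> Iy; rewrite kernel_functionalE trace_vector_Inf // mul0mx mxE. Qed.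

Lemma indicator_matrix_unit : A \in unitmx.
Proof. by rewrite -row_free_unit indicator_matrix_row_free. Qed.

Lemma kernel_weight_cancel l (X : 'rV[R]_n) :
  X *m A *m kernel_weight l = X *m \col_j (l j)%:~R.
Proof. by rewrite /kernel_weight mulmxA mulmxK // indicator_matrix_unit. Qed.

Lemma introw_col c l : (introw c *m \col_j (l j)%:~R) 0 0 = (\sum_j c j * l j)%:~R.
Proof. by rewrite mxE rmorph_sum; apply: eq_bigr => j _; rewrite !mxE rmorphM. Qed.

Lemma kernel_functional_indicator l j : kernel_functional l (indicator_elt j) = (l j)%:~R.
Proof.
by rewrite kernel_functionalE -row_indicator_matrix rowE kernel_weight_cancel -rowE !mxE.
Qed.

Lemma introw_neq0 c (d : R) y : d != 0 -> trace_vector y != 0 ->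
  introw c *m A + d *: trace_vector y = 0 -> exists j, c j != 0.
Proof.
move=> d_neq0 y_neq0 rel; apply: contrapT => /forallNP c0; move: rel.
have -> : introw c = 0 by apply/rowP => j; move/negP/negPn/eqP: (c0 j); rewrite !mxE => ->.
by rewrite mul0mx add0r => /eqP; rewrite scaler_eq0 (negPf d_neq0) (negPf y_neq0).
Qed.

Variables (v g : G) (c : R).
Hypotheses (v_unit : order_unit P v) (g_ratio : forall i, f i g = c * f i v).

Lemma trace_vector_ratio : trace_vector g = c *: trace_vector v.
Proof. by apply/rowP => i; rewrite !mxE g_ratio. Qed.

Lemma rank_n_ratio_rat : (forall h : 'I_n.+1 -> G, ~ indep_mod (Inf P u) h) -> is_rat c.
Proof.
move=> rank_le.
have [cv [dv [dv_neq0 rel_v]]] := rank_n_trace_relation rank_le v.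
have [cg [dg [dg_neq0 rel_g]]] := rank_n_trace_relation rank_le g.
have dv_neq0R : dv%:~R != 0 :> R by rewrite intr_eq0.
have [j cvj_neq0] := introw_neq0 dv_neq0R (trace_vector_order_unit_neq0 v_unit) rel_v.
have : (dv%:~R *: introw cg) *m A = ((dg%:~R * c) *: introw cv) *m A.
  move/eqP: rel_v; move/eqP: rel_g.
  rewrite trace_vector_ratio !addr_eq0 => /eqP rel_g /eqP rel_v.
  by rewrite -!scalemxAl rel_g rel_v !scalerN !scalerA; congr (- (_ *: _)); ring.
move=> /(row_free_inj indicator_matrix_row_free)/rowP/(_ j); rewrite !mxE => E.
have d_neq0 : (dg * cv j)%:~R != 0 :> R by rewrite intr_eq0 mulf_neq0.
have -> : c = (dv * cg j)%:~R / (dg * cv j)%:~R.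
  by rewrite intrM E -mulrA [c * _]mulrC mulrA -intrM mulrAC mulfV ?mul1r.
exact: is_rat_int_div.
Qed.

Section RankSucc.
Hypothesis rank_le : forall h : 'I_n.+2 -> G, ~ indep_mod (Inf P u) h.
Hypothesis c_irr : ~ is_rat c.

Lemma irrational_direction : exists cc w (bw : R),
  [/\ exists j, cc j != 0, trace_vector w = bw *: (introw cc *m A) & ~ is_rat bw].
Proof.
have [cc [cv [cg [nz rel]]]] := rank_succ_trace_relation rank_le v g.
rewrite trace_vector_ratio scalerA -addrA -scalerDl in rel; set d := _ + _ * c in rel.
have d_neq0 : d != 0.
  apply/eqP => d0; move: rel; rewrite d0 scale0r addr0 => /introw_eq0 cc0.
  have [cg0|cg_neq0] := eqVneq cg 0.
    move: d0 nz; rewrite /d cg0 mulr0z mul0r addr0 => /eqP; rewrite intr_eq0 => /eqP ->.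
    by case=> [[j]|[]]; rewrite ?cc0 ?eqxx.
  apply: c_irr; have -> : c = (- cv)%:~R / cg%:~R.
    rewrite mulrNz; move/eqP: d0; rewrite /d addrC addr_eq0 => /eqP <-.
    by rewrite mulrC mulKf // intr_eq0.
  exact: is_rat_int_div.
have v_eq : trace_vector v = (- d^-1) *: (introw cc *m A).
  move/eqP: rel; rewrite addr_eq0 => /eqP ->.
  by rewrite scalerN scaleNr opprK scalerA mulVf ?scale1r.
have [j ccj] := introw_neq0 d_neq0 (trace_vector_order_unit_neq0 v_unit) rel.
have [[q q_eq]|irr] := pselect (is_rat (- d^-1)).
  2: by exists cc, v, (- d^-1); split => //; exists j.
exists cc, g, (c * - d^-1); split; first by exists j.
  by rewrite trace_vector_ratio v_eq scalerA.
move=> c_rat; apply: c_irr.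
have -> : c = (c * - d^-1) / (- d^-1) by rewrite mulfK // oppr_eq0 invr_eq0.
by apply: is_ratM c_rat (is_ratV _); exists q.
Qed.

Lemma kernel_functional_rat cc w (bw : R) l : (exists j, cc j != 0) ->
  trace_vector w = bw *: (introw cc *m A) -> ~ is_rat bw -> \sum_j cc j * l j = 0 ->
  forall y, exists b : int, b != 0 /\ kernel_functional l y * b%:~R \is a Rint.
Proof.
move=> [j ccj] w_eq bw_irr orth y.
have [c2 [cw [cy [nz rel]]]] := rank_succ_trace_relation rank_le w y.
rewrite w_eq scalerA scalemxAl -mulmxDl in rel; set Y := introw c2 + _ in rel.
have cy_neq0 : cy != 0.
  apply/eqP => cy0; move: rel; rewrite cy0 scale0r addr0 => YA0.
  have /rowP Y0 : Y = 0.
    by apply: (row_free_inj indicator_matrix_row_free); rewrite /= YA0 mul0mx.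
  have [cw0|cw_neq0] := eqVneq cw 0.
    have c20 : introw c2 *m A = 0 by move: YA0; rewrite /Y cw0 mulr0z mul0r scale0r addr0.
    by case: nz => [[k]|[]]; rewrite ?(introw_eq0 c20) ?cw0 ?cy0 ?eqxx.
  apply: bw_irr; have /eqP := Y0 j; rewrite !mxE addr_eq0 => /eqP E.
  have -> : bw = (- c2 j)%:~R / (cw * cc j)%:~R.
    have X0 : cw%:~R * (cc j)%:~R != 0 :> R by rewrite mulf_neq0 ?intr_eq0.
    by rewrite mulrNz E intrM opprK [_ * bw * _]mulrAC [_ * bw]mulrC mulfK.
  exact: is_rat_int_div.
exists cy; split => //.
have cyR : cy%:~R != 0 :> R by rewrite intr_eq0.
have y_eq : trace_vector y = (- cy%:~R^-1) *: (Y *m A).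
  move/eqP: rel; rewrite addr_eq0 => /eqP ->.
  by rewrite scalerN scaleNr opprK scalerA mulVf ?scale1r.
have orth_mx : introw cc *m \col_j (l j)%:~R = 0.
  by apply/matrixP => i k; rewrite !ord1 introw_col orth mxE.
rewrite kernel_functionalE y_eq -scalemxAl kernel_weight_cancel /Y mulmxDl -scalemxAl.
rewrite orth_mx scaler0 addr0 mxE introw_col mulrAC mulNr mulVf //.
by rewrite mulN1r rpredN RintC.
Qed.

End RankSucc.

Lemma rank_succ_ratio_rat : (forall h : 'I_n.+2 -> G, ~ indep_mod (Inf P u) h) ->
  quot_fg (Inf P u) -> is_rat c.
Proof.
move=> rank_le fg; apply: contrapT => c_irr.
have [cc [w [bw [cc_neq0 w_eq bw_irr]]]] := irrational_direction rank_le c_irr.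
have [l [[j lj_neq0] orth]] := int_orthogonal cc n_gt1.
have [N [N_neq0 N_int]] := fg_common_denominator (kernel_functionalD l)
  (@kernel_functional_Inf l) fg (kernel_functional_rat rank_le cc_neq0 w_eq bw_irr orth).
have M_sum y : \sum_i f i y * (kernel_weight l i 0 * N%:~R) = kernel_functional l y * N%:~R.
  by rewrite /kernel_functional mulr_suml; apply: eq_bigr => i _; rewrite mulrA.
have M_int y : \sum_i f i y * (kernel_weight l i 0 * N%:~R) \is a Rint by rewrite M_sum.
have [Pxj _ _ _] := indicator_eltP j.
have /eqP := int_combination_cone_eq0 M_int Pxj.
rewrite M_sum kernel_functional_indicator -intrM intr_eq0.
by rewrite mulf_eq0 (negPf lj_neq0) (negPf N_neq0).
Qed.

End Miscibility.

Unset Implicit Arguments.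

Theorem mainTheorem15 (R : realType) (G : zmodType) (P : G -> Prop) (u : G) (n : nat) :
  dimension_group P -> simple_pog P -> order_unit P u -> (1 < n)%N ->
  exactly_n_pure_states P R u n ->
  (rank_quot_eq (Inf P u) n \/ (rank_quot_eq (Inf P u) n.+1 /\ quot_fg (Inf P u))) ->
  globally_irrationally_miscible P R.
Proof.
move=> dimG simpleG u_unit n_gt1 [f [f_inj f_pureP]] rank v v_unit g g_const s s_state.
have f_pure i : pure_state P u (f i) by apply/f_pureP; exists i.
have g_ratio i : f i g = s g * f i v.
  have fv_gt0 := state_order_unit_gt0 (f_pure i).1 v_unit.
  by rewrite -(g_const _ _ (state_rescale (f_pure i).1 v_unit) s_state) divfK ?gt_eqF.
case: rank => [[_ rank_le]|[[_ rank_le] fg]].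
  exact: (rank_n_ratio_rat dimG u_unit n_gt1 f_inj f_pure v_unit g_ratio rank_le).
exact: (rank_succ_ratio_rat dimG simpleG u_unit n_gt1 f_inj f_pure v_unit g_ratio rank_le fg).
Qed.
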